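(* Let $G$ be a graph of order $n$ with maximum degree $\Delta$ and with $s'$ strong support vertices. Then $\gamma_{cI}(G)\ge \frac{2(n+s')}{\Delta+2}$, and this bound is sharp.
   Context: All graphs are finite and simple; $N(v)$ is the open neighborhood of $v$. A leaf is a vertex of degree one; a support vertex is a vertex adjacent to a leaf; a support vertex is strong if it is adjacent to more than one leaf. For $f:V(G)\to\{0,1,2\}$ let $V_i=\{v: f(v)=i\}$ and $\omega(f)=\sum_v f(v)$. A covering Italian dominating function (CID function) of $G$ is an $f:V(G)\to\{0,1,2\}$ such that every vertex $v$ with $f(v)=0$ satisfies $\sum_{u\in N(v)}f(u)\ge 2$, and $V_0$ is an independent set. $\gamma_{cI}(G)$ is the minimum of $\omega(f)$ over all CID functions of $G$. *)

From mathcomp Require Import all_boot all_order all_algebra.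
Set Implicit Arguments. Unset Strict Implicit. Unset Printing Implicit Defensive.

(* A finite simple graph: vertex type T : finType, adjacency e : rel T,
   assumed symmetric and irreflexive (hypotheses in the theorem). *)
Section Graph.
Variables (T : finType) (e : rel T).

Definition nbhd (v : T) : {set T} := [set u | e v u].
Definition deg (v : T) : nat := #|nbhd v|.
(* maximum degree (0 for the empty graph) *)
Definition maxdeg : nat := \max_(v : T) deg v.
Definition leaf (v : T) : bool := deg v == 1.
Definition support_vertex (v : T) : bool := [exists u, leaf u && e v u].
Definition strong_support (v : T) : bool := 1 < #|[set u | e v u & leaf u]|.
Definition num_strong_support : nat := #|[set v | strong_support v]|.

Definition weight (f : {ffun T -> 'I_3}) : nat := \sum_(v : T) (f v : nat).
Definition isCID (f : {ffun T -> 'I_3}) : bool :=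
  [forall v, ((f v : nat) == 0) ==> (2 <= \sum_(u in nbhd v) (f u : nat))]
  && [forall u, forall v, e u v ==> ~~ (((f u : nat) == 0) && ((f v : nat) == 0))].

(* gamma_cI(G): minimum weight of a CID function. The constant-1 function is
   a CID function of weight #|T|, so #|T| is a valid initial value. *)
Definition gamma_cI : nat :=
  \big[minn/#|T|]_(f : {ffun T -> 'I_3} | isCID f) weight f.
End Graph.

(* Let f be a CID function of weight w, Δ the maximum degree and V_2 the
   vertices of weight 2.  Split (Δ + 2) w = 2 w + Σ_x deg x f x + Σ_x (Δ - deg x) f x.
   Double counting turns Σ_x deg x f x into Σ_x f(N(x)), and the CID condition
   gives 2 f x + f(N(x)) >= 2 + 2 [f x = 2] at every vertex, so the first two
   terms are at least 2 n + 2 |V_2|.  A strong support vertex outside V_2 forces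
   positive weight on each of its (at least two) leaves, and such a leaf u,
   having degree 1 < Δ, contributes at least 1 to the last term; leaves have a
   single neighbour, so no leaf is counted twice.  The star K_{1,D} attains the bound. *)

From mathcomp Require Import all_boot all_order all_algebra zify.
Import Order.TTheory GRing.Theory Num.Theory.

Set Implicit Arguments.
Unset Strict Implicit.
Unset Printing Implicit Defensive.

Lemma card_set_sum (T : finType) (P : pred T) : #|[set x | P x]| = \sum_x P x.
Proof. by rewrite -sum1dep_card big_mkcond. Qed.

Section Degrees.
Variables (T : finType) (e : rel T).

Lemma degE x : deg e x = \sum_u e x u.
Proof. exact: card_set_sum. Qed.

Lemma deg_le_maxdeg x : deg e x <= maxdeg e.
Proof. exact: (@leq_bigmax _ (fun v => deg e v) x). Qed.

Lemma strong_support_deg v : strong_support e v -> 2 <= deg e v.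
Proof.
by move/leq_trans; apply; apply/subset_leq_card/subsetP => u; rewrite !inE => /andP[].
Qed.

Lemma leaf_nbhd u v : leaf e u -> e u v -> nbhd e u = [set v].
Proof.
move=> /cards1P[w nbhd_u] euv.
have: v \in nbhd e u by rewrite inE.
by rewrite nbhd_u => /set1P ->.
Qed.

Hypothesis e_sym : symmetric e.

Lemma sum_deg_mul (g : T -> nat) :
  \sum_x deg e x * g x = \sum_x \sum_(u in nbhd e x) g u.
Proof.
transitivity (\sum_x \sum_(u | e x u) g x).
  by apply: eq_bigr => x _; rewrite -sum_nat_cond_const.
rewrite (exchange_big_dep xpredT) //=; apply: eq_bigr => u _.
by apply: eq_bigl => x; rewrite inE e_sym.
Qed.

Lemma sum_card_leaves (S : {set T}) :
  \sum_(v in S) #|[set u | e v u & leaf e u]|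
    <= #|[set u | leaf e u & [exists v in S, e u v]]|.
Proof.
rewrite card_set_sum (eq_bigr _ (fun v _ => card_set_sum _)) exchange_big /=.
apply: leq_sum => u _.
have [leaf_u|_] := boolP (leaf e u); last by rewrite big1 // => v _; rewrite andbF.
have [_|/existsPn noS] := boolP [exists v in S, e u v]; last first.
  rewrite big1 // => v vS; rewrite andbT e_sym.
  by have := noS v; rewrite vS /= => /negbTE ->.
apply: (@leq_trans (deg e u)); last by rewrite (eqP leaf_u).
rewrite degE big_mkcond leq_sum // => v _.
by case: (v \in S); rewrite // andbT e_sym.
Qed.

End Degrees.

Section CIDLowerBound.
Variables (T : finType) (e : rel T).
Hypothesis e_sym : symmetric e.
Variable f : {ffun T -> 'I_3}.
Hypothesis f_CID : isCID e f.

Lemma CID_zero_nbhd x : f x = 0 :> nat -> 2 <= \sum_(u in nbhd e x) f u.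
Proof. by case/andP: f_CID => /forallP/(_ x)/implyP + _ fx0; apply; rewrite fx0. Qed.

Lemma CID_local x : 2 + 2 * (f x == 2 :> nat) <= 2 * f x + \sum_(u in nbhd e x) f u.
Proof.
have := @CID_zero_nbhd x; have := ltn_ord (f x).
by case: (f x : nat) => [|[|[|]]] //= _ /(_ erefl); rewrite addnC leq_add2l.
Qed.

Lemma CID_leaf_pos u v : leaf e u -> e u v -> f v <= 1 -> 0 < f u.
Proof.
move=> leaf_u euv fv1; rewrite lt0n; apply/eqP => /CID_zero_nbhd.
by rewrite (leaf_nbhd leaf_u euv) big_set1 leqNgt ltnS fv1.
Qed.

Lemma CID_strong_low_count :
  2 * #|[set v | strong_support e v & f v <= 1]|
    <= \sum_x (maxdeg e - deg e x) * f x.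
Proof.
set S := [set v | _ & _].
apply: leq_trans (leq_trans _ (sum_card_leaves e_sym S)) _.
  by rewrite mulnC -sum_nat_const leq_sum // => v; rewrite inE => /andP[].
rewrite card_set_sum leq_sum // => u _.
case: (boolP (leaf e u && _)) => //= /andP[leaf_u /existsP[v /andP[]]].
rewrite inE => /andP[strong_v fv1] euv.
have := CID_leaf_pos leaf_u euv fv1.
have := leq_trans (strong_support_deg strong_v) (deg_le_maxdeg e v).
by rewrite (eqP leaf_u); nia.
Qed.

Lemma CID_weight_bound : 2 * (#|T| + num_strong_support e) <= (maxdeg e + 2) * weight f.
Proof.
set V2 := [set x | f x == 2 :> nat]; set S := [set v | strong_support e v & f v <= 1].
have base : 2 * #|T| + 2 * #|V2| <= 2 * weight f + \sum_x deg e x * f x.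
  have -> : 2 * #|T| = \sum_(x : T) 2 by rewrite sum_nat_const mulnC.
  rewrite sum_deg_mul // card_set_sum /weight !big_distrr -!big_split /=.
  by apply: leq_sum => x _; apply: CID_local.
have strong_split : num_strong_support e <= #|V2| + #|S|.
  apply: leq_trans (leq_of_leqif (leq_card_setU V2 S)).
  apply/subset_leq_card/subsetP => v.
  by rewrite /V2 /S !inE => ->; have := ltn_ord (f v); case: (f v : nat) => [|[|[|]]].
have weight_split : maxdeg e * weight f
    = \sum_x deg e x * f x + \sum_x (maxdeg e - deg e x) * f x.
  rewrite /weight big_distrr -big_split; apply: eq_bigr => x _ /=.
  by rewrite -mulnDl subnKC ?deg_le_maxdeg.
have := CID_strong_low_count; rewrite -/S; lia.
Qed.

End CIDLowerBound.

Section GammaCI.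
Variables (T : finType) (e : rel T).

Lemma CID_pos (f : {ffun T -> 'I_3}) : (forall x, 0 < f x) -> isCID e f.
Proof.
move=> f_pos; apply/andP; split; apply/forallP => u; first by rewrite eqn0Ngt f_pos.
by apply/forallP => v; apply/implyP => _; rewrite eqn0Ngt f_pos.
Qed.

Lemma gamma_cI_attained : exists2 f, isCID e f & gamma_cI e = weight f.
Proof.
apply: (big_ind (fun m => exists2 f, isCID e f & m = weight f)) => //.
- exists [ffun=> Ordinal (isT : 1 < 3)]; first by apply: CID_pos => x; rewrite ffunE.
  by rewrite /weight (eq_bigr (fun=> 1)) => [|x _]; rewrite ?ffunE ?sum_nat_const ?muln1.
- by move=> m1 m2 ? ?; rewrite /minn; case: ifP.
- by move=> f f_CID; exists f.
Qed.

Lemma gamma_cI_le f : isCID e f -> gamma_cI e <= weight f.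
Proof. by move=> f_CID; rewrite /gamma_cI -minEnat -leEnat bigmin_le_cond. Qed.

Lemma gamma_cI_lower_bound : symmetric e ->
  2 * (#|T| + num_strong_support e) <= (maxdeg e + 2) * gamma_cI e.
Proof.
by move=> e_sym; have [f f_CID ->] := gamma_cI_attained; apply: CID_weight_bound.
Qed.

End GammaCI.

Section Star.
Variable D : nat.
Hypothesis D_ge2 : 2 <= D.

Definition star_rel : rel 'I_D.+1 := fun i j => (i == ord0) != (j == ord0).

Lemma star_sym : symmetric star_rel.
Proof. by move=> i j; rewrite /star_rel eq_sym. Qed.

Lemma star_irrefl : irreflexive star_rel.
Proof. by move=> i; rewrite /star_rel eqxx. Qed.

Lemma star_nbhd_center : nbhd star_rel ord0 = [set~ ord0].
Proof. by apply/setP => u; rewrite !inE /star_rel eqxx. Qed.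

Lemma star_nbhd_leaf i : i != ord0 -> nbhd star_rel i = [set ord0].
Proof.
by move=> i_n0; apply/setP => u; rewrite !inE /star_rel (negbTE i_n0); case: (u == ord0).
Qed.

Lemma star_deg i : deg star_rel i = if i == ord0 then D else 1.
Proof.
case: (eqVneq i ord0) => [->|/star_nbhd_leaf]; rewrite /deg; last by move->; rewrite cards1.
by rewrite star_nbhd_center cardsC1 card_ord.
Qed.

Lemma star_maxdeg : maxdeg star_rel = D.
Proof.
apply/anti_leq/andP; split; last by have := deg_le_maxdeg star_rel ord0; rewrite star_deg.
by apply/bigmax_leqP => i _; rewrite star_deg; case: ifP => // _; lia.
Qed.

Lemma star_leaf i : leaf star_rel i = (i != ord0).
Proof. by rewrite /leaf star_deg; case: (eqVneq i ord0) => //= _; apply: gtn_eqF. Qed.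

Lemma star_strong_support i : strong_support star_rel i = (i == ord0).
Proof.
rewrite /strong_support; case: (eqVneq i ord0) => [->|i_n0].
  suff -> : [set u | star_rel ord0 u & leaf star_rel u] = [set~ ord0].
    by rewrite cardsC1 card_ord.
  by apply/setP => u; rewrite !inE star_leaf /star_rel eqxx andbb.
suff -> : [set u | star_rel i u & leaf star_rel u] = set0 by rewrite cards0.
by apply/setP => u; rewrite !inE star_leaf /star_rel (negbTE i_n0); case: (u == ord0).
Qed.

Lemma star_num_strong_support : num_strong_support star_rel = 1.
Proof.
rewrite /num_strong_support (_ : [set v | _] = [set ord0]) ?cards1 //.
by apply/setP => v; rewrite !inE star_strong_support.
Qed.

Lemma star_gamma_cI : gamma_cI star_rel = 2.
Proof.
apply/anti_leq/andP; split.
  pose g := [ffun v : 'I_D.+1 =>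
    if v == ord0 then Ordinal (isT : 2 < 3) else Ordinal (isT : 0 < 3)].
  have g_CID : isCID star_rel g.
    apply/andP; split; apply/forallP => v.
      rewrite ffunE; case: (eqVneq v ord0) => [//|v_n0].
      by rewrite star_nbhd_leaf // big_set1 ffunE eqxx.
    by apply/forallP => w; rewrite !ffunE /star_rel; case: (v == ord0); case: (w == ord0).
  apply: leq_trans (gamma_cI_le g_CID) _.
  rewrite /weight (bigD1 ord0) //= ffunE eqxx big1 // => i /negbTE i_n0.
  by rewrite ffunE i_n0.
have := gamma_cI_lower_bound star_sym.
by rewrite star_maxdeg star_num_strong_support card_ord; nia.
Qed.

End Star.

Local Open Scope ring_scope.

Theorem corollary7 :
  (forall (T : finType) (e : rel T), symmetric e -> irreflexive e ->
     (2 * (#|T| + num_strong_support e)%:R / (maxdeg e + 2)%:R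
       <= (gamma_cI e)%:R :> rat))
  /\
  (forall D : nat, (2 <= D)%N ->
     exists (n : nat) (e : rel 'I_n),
       [/\ symmetric e, irreflexive e, maxdeg e = D &
           (gamma_cI e)%:R
             = 2 * (n + num_strong_support e)%:R / (maxdeg e + 2)%:R :> rat]).
Proof.
split=> [T e e_sym _ | D D_ge2].
  rewrite ler_pdivrMr ?ltr0n ?addn_gt0 ?orbT // -!natrM ler_nat [X in (_ <= X)%N]mulnC.
  exact: gamma_cI_lower_bound.
exists D.+1, (star_rel (D:=D)); split.
- exact: star_sym.
- exact: star_irrefl.
- exact: star_maxdeg.
rewrite star_gamma_cI // star_maxdeg // star_num_strong_support // addn1 -[D.+2]addn2.
by rewrite mulfK // pnatr_eq0 addn2.
Qed.
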